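(* Let $\mathcal{V}$ be a locally finite equational class. Then $\mathrm{type}(\mathsf{C}_{\mathcal{V}}(\mathbf{A}))\in\{1,\omega\}$ for each $\mathbf{A}\in\mathsf{FP}(\mathcal{V})$ with $\mathsf{C}_{\mathcal{V}}(\mathbf{A})\neq\emptyset$. Hence $\mathcal{V}$ has unitary or finitary exact type.
   Context: $\mathcal{V}$ is locally finite if every finitely generated algebra in $\mathcal{V}$ is finite. $\mathsf{FP}(\mathcal{V})$ is the class of finitely presented algebras of $\mathcal{V}$; $\mathbf{F}_{\mathcal{V}}(\omega)$ is the free algebra of $\mathcal{V}$ on countably many generators. An algebra is exact in $\mathcal{V}$ if isomorphic to a finitely generated subalgebra of $\mathbf{F}_{\mathcal{V}}(\omega)$. A coexact unifier of $\mathbf{A}$ is an onto homomorphism $u\colon\mathbf{A}\to\mathbf{E}$ with $\mathbf{E}$ exact; $u_2\le u_1$ iff $f\circ u_1=u_2$ for some homomorphism $f$ between the codomains; $\mathsf{C}_{\mathcal{V}}(\mathbf{A})$ is the set of coexact unifiers preordered by $\le$. Types of a nonempty preordered set via $\mu$-sets (complete sets of pairwise incomparable elements, complete meaning every element is below a member): $0$ none, $\infty$ infinite, $\omega$ finite of size $>1$, $1$ size $1$; ordered $1<\omega<\infty<0$. The exact type of $\mathcal{V}$ is the maximal type of $\mathsf{E}_{\mathcal{V}}(\Sigma,\mathrm{Var}(\Sigma))$ over finite $\mathcal{V}$-unifiable sets $\Sigma$ of identities, where $\mathsf{E}_{\mathcal{V}}(\Sigma,X)$ is the set of substitutions $\sigma\colon\mathbf{Fm}(X)\to\mathbf{Fm}(\omega)$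 with $\mathcal{V}\models\sigma(\varphi)\approx\sigma(\psi)$ for all $\varphi\approx\psi\in\Sigma$, preordered by $\sigma_2\sqsubseteq\sigma_1$ iff every pair of formulas over $X$ whose $\sigma_1$-images are $\mathcal{V}$-equivalent also has $\mathcal{V}$-equivalent $\sigma_2$-images. *)

From Stdlib Require Import List Arith ClassicalEpsilon.
From Stdlib Require Fin.
Import ListNotations.

Set Implicit Arguments.

Section UA.
Variables (Op : Type) (ar : Op -> nat).

Inductive term (X : Type) : Type :=
| var : X -> term X
| app : forall f : Op, (Fin.t (ar f) -> term X) -> term X.
Arguments var {X}.
Arguments app {X}.

Record algebra := Algebra { car :> Type; op : forall f : Op, (Fin.t (ar f) -> car) -> car }.

Fixpoint eval {X : Type} (A : algebra) (v : X -> A) (t : term X) : A :=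
  match t with
  | var x => v x
  | app f ts => @op A f (fun i => eval A v (ts i))
  end.

Fixpoint subst {X Y : Type} (s : X -> term Y) (t : term X) : term Y :=
  match t with
  | var x => s x
  | app f ts => app f (fun i => subst s (ts i))
  end.

Fixpoint occurs (x : nat) (t : term nat) : Prop :=
  match t with
  | var y => x = y
  | app f ts => exists i, occurs x (ts i)
  end.

Definition is_hom (A B : algebra) (h : A -> B) : Prop :=
  forall f (args : Fin.t (ar f) -> A), h (@op A f args) = @op B f (fun i => h (args i)).

Definition surjective {S T : Type} (h : S -> T) := forall y, exists x, h x = y.
Definition injective {S T : Type} (h : S -> T) := forall x y, h x = h y -> x = y.

Definition iso (A B : algebra) : Prop :=
  exists h : A -> B, is_hom A B h /\ injective h /\ surjective h.

Definition subuniverse (A : algebra) (U : A -> Prop) : Prop :=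
  forall f (args : Fin.t (ar f) -> A), (forall i, U (args i)) -> U (@op A f args).

Definition sub_alg (A : algebra) (U : A -> Prop) (HU : subuniverse A U) : algebra :=
  {| car := {x : A | U x};
     op := fun f args => exist _ (@op A f (fun i => proj1_sig (args i)))
                               (HU f _ (fun i => proj2_sig (args i))) |}.

Definition generates (A : algebra) (n : nat) (g : Fin.t n -> A) : Prop :=
  forall a : A, forall U, subuniverse A U -> (forall i, U (g i)) -> U a.

Definition fin_gen (A : algebra) : Prop := exists n (g : Fin.t n -> A), generates A g.

Definition finite_type (T : Type) : Prop := exists l : list T, forall x, In x l.

(** The equational class V defined by a set [Eqs] of identities in countably many variables. *)
Variable Eqs : term nat -> term nat -> Prop.

Definition in_V (A : algebra) : Prop :=
  forall s t, Eqs s t -> forall v : nat -> A, eval A v s = eval A v t.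

Definition locally_finite : Prop :=
  forall A : algebra, in_V A -> fin_gen A -> finite_type A.

Definition Veq {X : Type} (s t : term X) : Prop :=
  forall A : algebra, in_V A -> forall v : X -> A, eval A v s = eval A v t.

(** The free algebra F_V(omega): formulas over omega modulo V-equivalence. *)
Definition FV_car : Type := {P : term nat -> Prop | exists t, P = Veq t}.
Definition FV_rep (x : FV_car) : term nat :=
  proj1_sig (constructive_indefinite_description _ (proj2_sig x)).
Definition FV_cls (t : term nat) : FV_car := exist _ (Veq t) (ex_intro _ t eq_refl).
Definition FV : algebra :=
  {| car := FV_car; op := fun f args => FV_cls (app f (fun i => FV_rep (args i))) |}.

Definition exact (E : algebra) : Prop :=
  exists (U : FV -> Prop) (HU : subuniverse FV U), fin_gen (sub_alg HU) /\ iso E (sub_alg HU).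

(** Finitely presented algebras of V: algebras presented in V by finitely many
    generators and finitely many relations (universal property of <X | Sigma>). *)
Definition FP (A : algebra) : Prop :=
  in_V A /\
  exists n (g : Fin.t n -> A) (Sig : list (term (Fin.t n) * term (Fin.t n))),
    generates A g /\
    (forall p, In p Sig -> eval A g (fst p) = eval A g (snd p)) /\
    (forall (B : algebra) (b : Fin.t n -> B), in_V B ->
       (forall p, In p Sig -> eval B b (fst p) = eval B b (snd p)) ->
       exists h : A -> B, is_hom A B h /\ forall i, h (g i) = b i).

Definition coexact_unifier (A : algebra) : Type :=
  {E : algebra & {u : A -> E | is_hom A E u /\ surjective u /\ exact E}}.

Definition cu_le (A : algebra) (u2 u1 : coexact_unifier A) : Prop :=
  exists f : projT1 u1 -> projT1 u2,
    is_hom (projT1 u1) (projT1 u2) f /\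
    forall a, f (proj1_sig (projT2 u1) a) = proj1_sig (projT2 u2) a.

Definition VarS (Sig : list (term nat * term nat)) (x : nat) : Prop :=
  exists p, In p Sig /\ (occurs x (fst p) \/ occurs x (snd p)).

(** Apply a substitution sigma : Fm(X) -> Fm(omega), X a set of variables,
    to a formula (variables outside X are left untouched; only formulas over X
    are ever substituted). *)
Definition ext_sub (Xp : nat -> Prop) (s : {x : nat | Xp x} -> term nat) (x : nat) : term nat :=
  match excluded_middle_informative (Xp x) with
  | left h => s (exist _ x h)
  | right _ => var x
  end.

Definition over (Xp : nat -> Prop) (t : term nat) : Prop := forall x, occurs x t -> Xp x.

Definition exact_unifier (Sig : list (term nat * term nat)) : Type :=
  {s : {x : nat | VarS Sig x} -> term nat |
     forall p, In p Sig -> Veq (subst (@ext_sub (VarS Sig) s) (fst p)) (subst (@ext_sub (VarS Sig) s) (snd p))}.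

Definition eu_le (Sig : list (term nat * term nat)) (s2 s1 : exact_unifier Sig) : Prop :=
  forall phi psi, over (VarS Sig) phi -> over (VarS Sig) psi ->
    Veq (subst (@ext_sub (VarS Sig) (proj1_sig s1)) phi) (subst (@ext_sub (VarS Sig) (proj1_sig s1)) psi) ->
    Veq (subst (@ext_sub (VarS Sig) (proj1_sig s2)) phi) (subst (@ext_sub (VarS Sig) (proj1_sig s2)) psi).

Definition unifiable (Sig : list (term nat * term nat)) : Prop := exists s : exact_unifier Sig, True.

End UA.

Arguments var {Op ar X}.
Arguments app {Op ar X}.

Inductive utype := t1 | tomega | tinf | t0.

Definition utype_rank (t : utype) : nat :=
  match t with t1 => 0 | tomega => 1 | tinf => 2 | t0 => 3 end.

Section Types.
Variables (T : Type) (le : T -> T -> Prop).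

Definition mu_set (M : T -> Prop) : Prop :=
  (forall x y, M x -> M y -> x <> y -> ~ le x y) /\
  (forall x, exists m, M m /\ le x m).

Definition finite_set (M : T -> Prop) : Prop := exists l : list T, forall x, M x <-> In x l.

Definition has_type (t : utype) : Prop :=
  match t with
  | t1 => exists M, mu_set M /\ exists m, forall x, M x <-> x = m
  | tomega => exists M, mu_set M /\
      exists l : list T, NoDup l /\ (forall x, M x <-> In x l) /\ 1 < length l
  | tinf => exists M, mu_set M /\ ~ finite_set M
  | t0 => ~ exists M, mu_set M
  end.
End Types.

Definition exact_type (Op : Type) (ar : Op -> nat) (Eqs : term ar nat -> term ar nat -> Prop)
  (t : utype) : Prop :=
  (exists Sig, unifiable Eqs Sig /\ has_type (@eu_le Op ar Eqs Sig) t) /\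
  (forall Sig t', unifiable Eqs Sig -> has_type (@eu_le Op ar Eqs Sig) t' ->
     utype_rank t' <= utype_rank t).

From Pilot Require Import Defs.
From Stdlib Require Import List Lia Wf_nat.
From Stdlib Require Import ClassicalEpsilon Classical FunctionalExtensionality PropExtensionality ProofIrrelevance.
Import ListNotations.

(* In both cases the preorder is inclusion of kernels: u2 <= u1 iff every pair
   identified by u1 is identified by u2 (for exact unifiers, pairs of formulas over
   Var(Sigma) made V-equivalent).  Local finiteness makes the relevant set of pairs
   finite: a finitely presented A is finite, and the free algebra over the finitely
   many variables of Sigma is finite, so formulas over Var(Sigma) fall into finitely
   many V-classes.  A preorder induced by subsets of a finite set has finitely many
   classes and every element lies below a maximal one, so one representative per
   maximal class is a finite mu-set.  A finite mu-set forces type 1 or omega, and,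
   since any two mu-sets of a preorder are in bijection, it also rules out types
   infinity and 0. *)

Definition pbool (Q : Prop) : bool := if excluded_middle_informative Q then true else false.

Lemma pbool_true (Q : Prop) : pbool Q = true <-> Q.
Proof. unfold pbool; destruct (excluded_middle_informative Q); split; auto; discriminate. Qed.

Lemma length_filter_le {A : Type} (p q : A -> bool) (l : list A) :
  (forall a, In a l -> q a = true -> p a = true) ->
  length (filter q l) <= length (filter p l).
Proof.
  induction l as [|a l IH]; simpl; intros Hqp; auto.
  specialize (IH (fun b Hb => Hqp b (or_intror Hb))).
  specialize (Hqp a (or_introl eq_refl)).
  destruct (q a), (p a); simpl; try lia; discriminate (Hqp eq_refl).
Qed.

Lemma length_filter_lt {A : Type} (p q : A -> bool) (l : list A) :
  (forall a, In a l -> q a = true -> p a = true) ->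
  (exists a, In a l /\ p a = true /\ q a = false) ->
  length (filter q l) < length (filter p l).
Proof.
  induction l as [|a l IH]; simpl; intros Hqp [b [Hb [Hp Hq]]]; [contradiction|].
  assert (Hqp' : forall c, In c l -> q c = true -> p c = true) by auto.
  destruct Hb as [<-|Hb].
  - rewrite Hp, Hq. simpl. pose proof (length_filter_le p q l Hqp'). lia.
  - specialize (IH Hqp' (ex_intro _ b (conj Hb (conj Hp Hq)))).
    specialize (Hqp a (or_introl eq_refl)).
    destruct (q a), (p a); simpl; try lia; discriminate (Hqp eq_refl).
Qed.

Fixpoint bool_lists (n : nat) : list (list bool) :=
  match n with
  | 0 => [[]]
  | S n => map (cons true) (bool_lists n) ++ map (cons false) (bool_lists n)
  end.

Lemma in_bool_lists (b : list bool) : In b (bool_lists (length b)).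
Proof.
  induction b as [|x b IH]; simpl; auto.
  apply in_or_app. destruct x; [left|right]; apply in_map; auto.
Qed.

Definition option_list {A : Type} (o : option A) : list A :=
  match o with Some x => [x] | None => [] end.

Lemma in_option_list {A : Type} (o : option A) (x : A) : In x (option_list o) <-> o = Some x.
Proof. destruct o; simpl; split; intuition congruence. Qed.

Section Transversal.
Variables (T B : Type) (f : T -> B) (Q : T -> Prop) (bs : list B).
Hypothesis in_bs : forall x, In (f x) bs.

Definition representative (b : B) : option T :=
  match excluded_middle_informative (exists x, Q x /\ f x = b) with
  | left E => Some (proj1_sig (constructive_indefinite_description _ E))
  | right _ => None
  end.

Lemma representative_spec (b : B) (x : T) : representative b = Some x -> Q x /\ f x = b.
Proof.
  unfold representative; destruct excluded_middle_informative as [E|]; [|discriminate].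
  intro Hx; injection Hx as <-. exact (proj2_sig (constructive_indefinite_description _ E)).
Qed.

Lemma finite_transversal : exists l : list T,
  NoDup l /\ (forall x, In x l -> Q x) /\
  (forall x, Q x -> exists y, In y l /\ f y = f x) /\
  (forall x y, In x l -> In y l -> f x = f y -> x = y).
Proof.
  set (l := flat_map (fun b => option_list (representative b)) bs).
  assert (Hl : forall x, In x l <-> exists b, representative b = Some x).
  { intro x. unfold l. rewrite in_flat_map. split.
    - intros [b [_ Hb]]. exists b. apply in_option_list; auto.
    - intros [b Hb]. exists b. split; [|apply in_option_list; auto].
      destruct (representative_spec _ _ Hb) as [_ <-]. apply in_bs. }
  exists (nodup (fun x y => excluded_middle_informative (x = y)) l).
  split; [apply NoDup_nodup|]. setoid_rewrite nodup_In. setoid_rewrite Hl.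
  split; [|split].
  - intros x [b Hb]. apply (representative_spec _ _ Hb).
  - intros x Qx. destruct (representative (f x)) as [y|] eqn:Hy.
    + exists y. split; [eauto|exact (proj2 (representative_spec _ _ Hy))].
    + unfold representative in Hy. destruct excluded_middle_informative as [|N]; [discriminate|]. exfalso; eauto.
  - intros x y [b Hb] [c Hc] Hxy.
    destruct (representative_spec _ _ Hb) as [_ Eb], (representative_spec _ _ Hc) as [_ Ec].
    congruence.
Qed.
End Transversal.

Section KernelPreorder.
Variables (T P : Type) (le : T -> T -> Prop) (R : T -> P -> P -> Prop) (L : list P).
Hypothesis le_kernel :
  forall x y, le y x <-> (forall p q, In p L -> In q L -> R x p q -> R y p q).

Lemma kernel_le_refl (x : T) : le x x.
Proof. apply le_kernel; auto. Qed.

Lemma kernel_le_trans (x y z : T) : le x y -> le y z -> le x z.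
Proof.
  intros Hxy Hyz. apply le_kernel. intros p q Hp Hq Hz.
  apply (proj1 (le_kernel y x) Hxy p q Hp Hq), (proj1 (le_kernel z y) Hyz p q Hp Hq), Hz.
Qed.

Definition related (x : T) (a : P * P) : bool := pbool (R x (fst a) (snd a)).
Definition signature (x : T) : list bool := map (related x) (list_prod L L).
Definition related_count (x : T) : nat := length (filter (related x) (list_prod L L)).
Definition maximal (x : T) : Prop := forall y, le x y -> le y x.

Lemma le_of_signature_eq (x y : T) : signature x = signature y -> le x y.
Proof.
  intro E. apply le_kernel. intros p q Hp Hq Hy.
  assert (Epq : related x (p, q) = related y (p, q)).
  { apply (proj1 map_ext_in_iff E). apply in_prod; auto. }
  apply pbool_true. unfold related in Epq; simpl in Epq. rewrite Epq. apply pbool_true; auto.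
Qed.

Lemma signature_eq_of_le (x y : T) : le x y -> le y x -> signature x = signature y.
Proof.
  intros Hxy Hyx. apply map_ext_in. intros [p q] Hpq. apply in_prod_iff in Hpq as [Hp Hq].
  unfold related; simpl. f_equal. apply propositional_extensionality.
  split; [apply (proj1 (le_kernel x y) Hyx)|apply (proj1 (le_kernel y x) Hxy)]; auto.
Qed.

Lemma related_count_lt (x y : T) : le x y -> ~ le y x -> related_count y < related_count x.
Proof.
  intros Hxy Hyx. apply length_filter_lt.
  - intros [p q] Hpq Hy. apply in_prod_iff in Hpq as [Hp Hq].
    unfold related in *; simpl in *. apply (proj1 (pbool_true _)) in Hy. apply pbool_true.
    exact (proj1 (le_kernel y x) Hxy p q Hp Hq Hy).
  - apply NNPP. intro N. apply Hyx, le_kernel. intros p q Hp Hq Hx.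
    apply NNPP. intro Hy. apply N. exists (p, q).
    split; [apply in_prod; auto|]. unfold related; simpl.
    split; [apply pbool_true; auto|].
    destruct (pbool (R y p q)) eqn:E; auto. apply (proj1 (pbool_true _)) in E. contradiction.
Qed.

Lemma exists_maximal_above (x : T) : exists m, maximal m /\ le x m.
Proof.
  revert x. apply (induction_ltof1 _ related_count). intros x IH.
  destruct (classic (maximal x)) as [Mx|Mx]; [exists x; split; auto; apply kernel_le_refl|].
  apply not_all_ex_not in Mx as [y Hy]. apply imply_to_and in Hy as [Hxy Hyx].
  destruct (IH y (related_count_lt x y Hxy Hyx)) as [m [Mm Hym]].
  exists m. split; auto. eapply kernel_le_trans; eauto.
Qed.

Lemma kernel_preorder_finite_mu_set : exists l : list T, NoDup l /\ mu_set le (fun x => In x l).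
Proof.
  destruct (@finite_transversal T (list bool) signature maximal (bool_lists (length (list_prod L L))))
    as [l [Hnd [Hmax [Hcov Hinj]]]].
  { intro x. rewrite <- (length_map (related x)). apply in_bool_lists. }
  exists l. split; [exact Hnd|split].
  - intros x y Hx Hy Hne Hxy. apply Hne, Hinj; auto.
    apply signature_eq_of_le; auto. apply Hmax; auto.
  - intro x. destruct (exists_maximal_above x) as [m [Mm Hxm]].
    destruct (Hcov m Mm) as [y [Hy Ey]]. exists y. split; auto.
    eapply kernel_le_trans; [exact Hxm|]. apply le_of_signature_eq; auto.
Qed.
End KernelPreorder.

Section MuSets.
Variables (T : Type) (le : T -> T -> Prop).

Lemma has_type_of_finite_mu_set (x0 : T) (l : list T) :
  NoDup l -> mu_set le (fun x => In x l) -> has_type le t1 \/ has_type le tomega.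
Proof.
  intros Hnd Hmu. destruct l as [|m [|m' l]].
  - destruct (proj2 Hmu x0) as [? [[] _]].
  - left. exists (fun x => In x [m]). split; auto.
    exists m. intro x; simpl; intuition.
  - right. exists (fun x => In x (m :: m' :: l)). split; auto.
    exists (m :: m' :: l). simpl; repeat split; auto; lia.
Qed.

Hypothesis le_transitive : forall x y z, le x y -> le y z -> le x z.

(* Every element of M is equivalent to an element of l, and each element of l is
   equivalent to at most one element of M. *)
Lemma mu_set_finite (l : list T) (M : T -> Prop) :
  mu_set le (fun x => In x l) -> mu_set le M -> finite_set M.
Proof.
  intros [_ Hl] [HM HMcov].
  set (partner := fun m => match excluded_middle_informative (exists y, M y /\ le m y /\ le y m) with
    | left E => Some (proj1_sig (constructive_indefinite_description _ E))
    | right _ => None end).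
  assert (Huniq : forall x y, M x -> M y -> le x y -> x = y)
    by (intros x y Mx My Hxy; apply NNPP; intro Ne; exact (HM x y Mx My Ne Hxy)).
  exists (flat_map (fun m => option_list (partner m)) l). intro x.
  rewrite in_flat_map. setoid_rewrite in_option_list. unfold partner. split.
  - intro Mx. destruct (Hl x) as [m [Hm Hxm]]. destruct (HMcov m) as [y [My Hmy]].
    assert (x = y) as <- by eauto.
    exists m. split; auto. destruct excluded_middle_informative as [E|N]; [|exfalso; eauto].
    destruct (proj2_sig (constructive_indefinite_description _ E)) as [Mz [Hmz Hzm]].
    f_equal. symmetry. eauto.
  - intros [m [_ Hx]]. destruct excluded_middle_informative as [E|]; [|discriminate].
    injection Hx as <-. apply (proj2_sig (constructive_indefinite_description _ E)).
Qed.

Lemma utype_rank_le_1_of_finite_mu_set (l : list T) (t : utype) :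
  mu_set le (fun x => In x l) -> has_type le t -> utype_rank t <= 1.
Proof.
  intros Hl Ht. destruct t; simpl in *; auto.
  - destruct Ht as [M [HM Hinf]]. destruct (Hinf (mu_set_finite l M Hl HM)).
  - destruct (Ht (ex_intro _ _ Hl)).
Qed.
End MuSets.

Section Equational.
Variables (Op : Type) (ar : Op -> nat) (Eqs : term ar nat -> term ar nat -> Prop).

Lemma eval_subst {Y Z : Type} (A : algebra ar) (v : Z -> A) (s : Y -> term ar Z) (t : term ar Y) :
  eval A v (subst s t) = eval A (fun x => eval A v (s x)) t.
Proof.
  induction t as [x|f ts IH]; simpl; auto.
  f_equal. apply functional_extensionality; auto.
Qed.

Lemma Veq_refl {Y : Type} (t : term ar Y) : Veq Eqs t t.
Proof. intros A _ v; auto. Qed.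

Lemma Veq_sym {Y : Type} (s t : term ar Y) : Veq Eqs s t -> Veq Eqs t s.
Proof. intros H A HA v; symmetry; auto. Qed.

Lemma Veq_trans {Y : Type} (s t u : term ar Y) : Veq Eqs s t -> Veq Eqs t u -> Veq Eqs s u.
Proof. intros H1 H2 A HA v; rewrite (H1 A HA v); auto. Qed.

Lemma Veq_subst {Y Z : Type} (sg : Y -> term ar Z) (s t : term ar Y) :
  Veq Eqs s t -> Veq Eqs (subst sg s) (subst sg t).
Proof. intros H A HA v. rewrite !eval_subst. auto. Qed.

Lemma Veq_app {Y : Type} f (ss ts : Fin.t (ar f) -> term ar Y) :
  (forall i, Veq Eqs (ss i) (ts i)) -> Veq Eqs (Defs.app f ss) (Defs.app f ts).
Proof. intros H A HA v; simpl. f_equal. apply functional_extensionality; intro i; apply H; auto. Qed.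

Lemma Veq_class_eq (s t : term ar nat) : Veq Eqs s t -> Veq Eqs s = Veq Eqs t.
Proof.
  intro H. apply functional_extensionality; intro u. apply propositional_extensionality.
  split; intro; eapply Veq_trans; eauto using Veq_sym.
Qed.

Lemma Veq_of_class_eq (s t : term ar nat) : Veq Eqs s = Veq Eqs t -> Veq Eqs s t.
Proof. intro H. rewrite H. apply Veq_refl. Qed.

Lemma cu_le_kernel (A : algebra ar) (u1 u2 : coexact_unifier Eqs A) :
  cu_le u2 u1 <-> forall a b, proj1_sig (projT2 u1) a = proj1_sig (projT2 u1) b ->
                              proj1_sig (projT2 u2) a = proj1_sig (projT2 u2) b.
Proof.
  destruct u1 as [E1 [u1 [Hom1 [Sur1 Ex1]]]], u2 as [E2 [u2 [Hom2 [Sur2 Ex2]]]]; unfold cu_le; simpl. split.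
  - intros [f [_ Hf]] a b E. rewrite <- !Hf, E. auto.
  - intro K.
    set (pre := fun e => proj1_sig (constructive_indefinite_description _ (Sur1 e))).
    assert (Hpre : forall e, u1 (pre e) = e)
      by (intro e; exact (proj2_sig (constructive_indefinite_description _ (Sur1 e)))).
    exists (fun e => u2 (pre e)). split.
    + intros f args. rewrite <- Hom2. apply K. rewrite Hom1, Hpre. f_equal.
      apply functional_extensionality; intro i; rewrite Hpre; auto.
    + intro a. apply K. apply Hpre.
Qed.

Fixpoint fin_list (n : nat) : list (Fin.t n) :=
  match n with 0 => [] | S n => Fin.F1 :: map Fin.FS (fin_list n) end.

Lemma in_fin_list n (i : Fin.t n) : In i (fin_list n).
Proof. induction i; simpl; auto. right. apply in_map; auto. Qed.

Fixpoint vars (t : term ar nat) : list nat :=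
  match t with
  | var x => [x]
  | Defs.app f ts => flat_map (fun i => vars (ts i)) (fin_list (ar f))
  end.

Lemma occurs_vars (x : nat) (t : term ar nat) : occurs x t <-> In x (vars t).
Proof.
  induction t as [y|f ts IH]; simpl; [intuition|].
  rewrite in_flat_map. split.
  - intros [i Hi]. exists i. split; [apply in_fin_list|apply IH; auto].
  - intros [i [_ Hi]]. exists i. apply IH; auto.
Qed.

Lemma VarS_finite (Sig : list (term ar nat * term ar nat)) :
  exists xs, forall x, VarS Sig x <-> In x xs.
Proof.
  exists (flat_map (fun p => vars (fst p) ++ vars (snd p)) Sig). intro x.
  unfold VarS. rewrite in_flat_map. setoid_rewrite in_app_iff. setoid_rewrite occurs_vars.
  reflexivity.
Qed.

Lemma eu_le_trans (Sig : list (term ar nat * term ar nat)) (s1 s2 s3 : exact_unifier Eqs Sig) :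
  eu_le s1 s2 -> eu_le s2 s3 -> eu_le s1 s3.
Proof. intros H12 H23 phi psi Hphi Hpsi E. apply H12, H23; auto. Qed.

Lemma unifiable_nil : unifiable Eqs [].
Proof.
  unshelve eexists; [|exact I].
  exists (fun x => var (proj1_sig x)). intros p [].
Qed.
Hypothesis HV : locally_finite Eqs.

Lemma FP_finite (A : algebra ar) : FP Eqs A -> finite_type A.
Proof. intros [HA [n [g [_ [Hg _]]]]]. exact (HV A HA (ex_intro _ n (ex_intro _ g Hg))). Qed.

Lemma coexact_unifiers_finite_mu_set (A : algebra ar) : FP Eqs A ->
  exists l : list (coexact_unifier Eqs A), NoDup l /\ mu_set (cu_le (A:=A)) (fun u => In u l).
Proof.
  intro HA. destruct (FP_finite A HA) as [L HL].
  apply (kernel_preorder_finite_mu_set _ _ _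
           (fun u a b => proj1_sig (projT2 u) a = proj1_sig (projT2 u) b) L).
  intros u1 u2. rewrite cu_le_kernel. split; auto.
Qed.

Section FreeOver.
Variable X : nat -> Prop.

Lemma over_app f (ts : Fin.t (ar f) -> term ar nat) :
  (forall i, over X (ts i)) -> over X (Defs.app f ts).
Proof. intros H x [i Hi]. exact (H i x Hi). Qed.

Lemma over_app_inv f (ts : Fin.t (ar f) -> term ar nat) :
  over X (Defs.app f ts) -> forall i, over X (ts i).
Proof. intros H i x Hi. apply H. exists i; auto. Qed.

(* The free algebra of V over the variables in X: V-classes of formulas over X. *)
Definition FX_car : Type := {C : term ar nat -> Prop | exists t, over X t /\ C = Veq Eqs t}.

Definition FX_rep (c : FX_car) : term ar nat :=
  proj1_sig (constructive_indefinite_description _ (proj2_sig c)).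

Lemma FX_rep_spec (c : FX_car) : over X (FX_rep c) /\ proj1_sig c = Veq Eqs (FX_rep c).
Proof. exact (proj2_sig (constructive_indefinite_description _ (proj2_sig c))). Qed.

Definition FX_cls (t : term ar nat) (Ht : over X t) : FX_car :=
  exist _ (Veq Eqs t) (ex_intro _ t (conj Ht eq_refl)).
Arguments FX_cls {t} Ht.

Lemma FX_ext (c d : FX_car) : proj1_sig c = proj1_sig d -> c = d.
Proof. destruct c, d; simpl; intro; subst; f_equal; apply proof_irrelevance. Qed.

Definition FX : algebra ar :=
  {| car := FX_car;
     op := fun f args => FX_cls (over_app f _ (fun i => proj1 (FX_rep_spec (args i)))) |}.

Lemma FX_eval (v : nat -> FX) (s : term ar nat) :
  proj1_sig (eval FX v s) = Veq Eqs (subst (fun x => FX_rep (v x)) s).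
Proof.
  induction s as [x|f ts IH]; simpl.
  - apply FX_rep_spec.
  - apply Veq_class_eq, Veq_app. intro i. apply Veq_of_class_eq.
    rewrite <- IH. symmetry. apply FX_rep_spec.
Qed.

Lemma FX_in_V : in_V Eqs FX.
Proof.
  intros s t Hst v. apply FX_ext. rewrite !FX_eval. apply Veq_class_eq.
  intros B HB w. rewrite !eval_subst. apply HB; auto.
Qed.

Variable xs : list nat.
Hypothesis X_xs : forall x, X x <-> In x xs.

Lemma over_generator (i : Fin.t (length xs)) :
  over (ar:=ar) X (var (nth (proj1_sig (Fin.to_nat i)) xs 0)).
Proof. intros x Hx. simpl in Hx. subst. apply X_xs, nth_In, (proj2_sig (Fin.to_nat i)). Qed.

Definition FX_generator (i : Fin.t (length xs)) : FX := FX_cls (over_generator i).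

Lemma FX_generated : generates FX FX_generator.
Proof.
  intros a U HU Hgen.
  assert (Hcls : forall t (Ht : over X t), U (FX_cls Ht)).
  { induction t as [x|f ts IH]; intro Ht.
    - assert (Hx : In x xs) by (apply X_xs, Ht; simpl; auto).
      destruct (In_nth xs x 0 Hx) as [k [Hk Hnth]].
      replace (FX_cls Ht) with (FX_generator (Fin.of_nat_lt Hk)); [apply Hgen|].
      apply FX_ext. simpl. rewrite Fin.to_nat_of_nat. simpl. rewrite Hnth. auto.
    - replace (FX_cls Ht) with (op FX f (fun i => FX_cls (over_app_inv f ts Ht i))).
      + apply HU. intro i; apply IH.
      + apply FX_ext. simpl. apply Veq_class_eq, Veq_app. intro i. apply Veq_of_class_eq.
        symmetry. exact (proj2 (FX_rep_spec (FX_cls (over_app_inv f ts Ht i)))). }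
  replace a with (FX_cls (proj1 (FX_rep_spec a))); [apply Hcls|].
  apply FX_ext. simpl. symmetry. apply FX_rep_spec.
Qed.

Lemma finitely_many_Veq_classes_over : exists reps : list (term ar nat),
  (forall r, In r reps -> over X r) /\
  forall t, over X t -> exists r, In r reps /\ Veq Eqs t r.
Proof.
  destruct (HV FX FX_in_V (ex_intro _ _ (ex_intro _ FX_generator FX_generated))) as [cs Hcs].
  exists (map FX_rep cs). split.
  - intros r Hr. apply in_map_iff in Hr as [c [<- _]]. apply FX_rep_spec.
  - intros t Ht. exists (FX_rep (FX_cls Ht)). split; [apply in_map; auto|].
    apply Veq_of_class_eq. exact (proj2 (FX_rep_spec (FX_cls Ht))).
Qed.
End FreeOver.

Lemma exact_unifiers_finite_mu_set (Sig : list (term ar nat * term ar nat)) :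
  exists l : list (exact_unifier Eqs Sig), NoDup l /\ mu_set (eu_le (Sig:=Sig)) (fun s => In s l).
Proof.
  destruct (VarS_finite Sig) as [xs Hxs].
  destruct (finitely_many_Veq_classes_over (VarS Sig) xs Hxs) as [reps [Hover Hreps]].
  set (sb := fun s : exact_unifier Eqs Sig => ext_sub (VarS Sig) (proj1_sig s)).
  apply (kernel_preorder_finite_mu_set _ _ _
           (fun s p q => Veq Eqs (subst (sb s) p) (subst (sb s) q)) reps).
  intros s1 s2. split.
  - intros H p q Hp Hq. apply H; auto.
  - intros H phi psi Hphi Hpsi E.
    destruct (Hreps _ Hphi) as [r [Hr Er]], (Hreps _ Hpsi) as [r' [Hr' Er']].
    assert (K : Veq Eqs (subst (sb s2) r) (subst (sb s2) r')).
    { apply H; auto. eapply Veq_trans; [apply Veq_sym, Veq_subst, Er|].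
      eapply Veq_trans; [exact E|apply Veq_subst, Er']. }
    eapply Veq_trans; [apply Veq_subst, Er|].
    eapply Veq_trans; [exact K|apply Veq_sym, Veq_subst, Er'].
Qed.

End Equational.


Theorem corollary3p8 (Op : Type) (ar : Op -> nat)
  (Eqs : term ar nat -> term ar nat -> Prop)
  (HV : locally_finite Eqs) :
  (forall A : algebra ar, FP Eqs A ->
     (exists u : coexact_unifier Eqs A, True) ->
     has_type (cu_le (Eqs:=Eqs) (A:=A)) t1 \/ has_type (cu_le (Eqs:=Eqs) (A:=A)) tomega) /\
  (exact_type Eqs t1 \/ exact_type Eqs tomega).
Proof.
  split.
  - intros A HA [u0 _].
    destruct (coexact_unifiers_finite_mu_set _ _ _ HV A HA) as [l [Hnd Hmu]].
    exact (has_type_of_finite_mu_set _ _ u0 l Hnd Hmu).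
  - assert (Hrank : forall Sig t, has_type (@eu_le Op ar Eqs Sig) t -> utype_rank t <= 1).
    { intros Sig t Ht. destruct (exact_unifiers_finite_mu_set _ _ _ HV Sig) as [l [_ Hmu]].
      exact (utype_rank_le_1_of_finite_mu_set _ _ (eu_le_trans Op ar Eqs Sig) l t Hmu Ht). }
    destruct (unifiable_nil Op ar Eqs) as [s0 _].
    destruct (classic (exists Sig, unifiable Eqs Sig /\ has_type (@eu_le Op ar Eqs Sig) tomega))
      as [Homega|Hno_omega].
    + right. split; [exact Homega|]. intros Sig t _ Ht. exact (Hrank Sig t Ht).
    + left. split.
      * exists []. split; [apply unifiable_nil|].
        destruct (exact_unifiers_finite_mu_set _ _ _ HV []) as [l [Hnd Hmu]].
        destruct (has_type_of_finite_mu_set _ _ s0 l Hnd Hmu) as [Ht1|Homega]; auto.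
        exfalso. apply Hno_omega. exists []. split; [apply unifiable_nil|exact Homega].
      * intros Sig t HSig Ht. specialize (Hrank Sig t Ht).
        destruct t; simpl in *; try lia.
        exfalso. apply Hno_omega. eauto.
Qed.
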